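(* Let $(M,d)$ be a metric space and let $\mathcal S$ be a semigroup (under composition) of self-mappings of $M$ generated by a family of uniformly asymptotically regular mappings. Suppose $\mathcal S$ is subsurjective, i.e. there is a nonempty set $D\subset M$ such that $T(D)=D$ for every $T\in\mathcal S$. Then $\mathcal S$ has a common fixed point: there is $x\in M$ with $Tx=x$ for all $T\in\mathcal S$.
   Context: A mapping $T:M\to M$ is uniformly asymptotically regular if $\lim_{n\to\infty}\sup_{x\in M} d(T^{n+1}x,T^{n}x)=0$. *)

From Stdlib Require Import Reals.
Open Scope R_scope.

Definition is_metric {M : Type} (d : M -> M -> R) : Prop :=
  (forall x y, 0 <= d x y) /\
  (forall x y, d x y = 0 <-> x = y) /\
  (forall x y, d x y = d y x) /\
  (forall x y z, d x z <= d x y + d y z).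

(* T is uniformly asymptotically regular:
   lim_{n->oo} sup_{x in M} d(T^{n+1} x, T^n x) = 0,
   written out with epsilon/N (the sup being taken in [0,+oo]). *)
Definition unif_asympt_regular {M : Type} (d : M -> M -> R) (T : M -> M) : Prop :=
  forall eps, 0 < eps -> exists N : nat, forall n : nat, (N <= n)%nat ->
    forall x : M, d (Nat.iter (S n) T x) (Nat.iter n T x) <= eps.

Inductive gen_semigroup {M : Type} (F : (M -> M) -> Prop) : (M -> M) -> Prop :=
  | gen_base : forall T, F T -> gen_semigroup F T
  | gen_comp : forall T1 T2, gen_semigroup F T1 -> gen_semigroup F T2 ->
      gen_semigroup F (fun x => T1 (T2 x)).

Definition subsurjective {M : Type} (S : (M -> M) -> Prop) : Prop :=
  exists D : M -> Prop, (exists x, D x) /\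
    forall T, S T -> forall y, D y <-> exists x, D x /\ T x = y.

From Stdlib Require Import Reals Lra.
Open Scope R_scope.

(* If T maps a nonempty set D onto a superset of D, every y in D is T^n x for
   some x in D, so d(T y, y) = d(T^(n+1) x, T^n x), which uniform asymptotic
   regularity makes arbitrarily small: each generator fixes D pointwise, hence
   so does the semigroup it generates. *)

Lemma iter_surj_on {M : Type} (T : M -> M) (D : M -> Prop) :
  (forall y, D y -> exists x, D x /\ T x = y) ->
  forall n y, D y -> exists x, D x /\ Nat.iter n T x = y.
Proof.
  intros Hsurj n; induction n as [|n IH]; intros y Hy.
  - exists y; split; auto.
  - destruct (Hsurj y Hy) as [z [Hz <-]].
    destruct (IH z Hz) as [x [Hx <-]].
    exists x; split; auto.
Qed.

Lemma unif_asympt_regular_fix_surj_on {M : Type} (d : M -> M -> R)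
    (T : M -> M) (D : M -> Prop) :
  is_metric d -> unif_asympt_regular d T ->
  (forall y, D y -> exists x, D x /\ T x = y) ->
  forall y, D y -> T y = y.
Proof.
  intros [Hpos [Hzero _]] Hreg Hsurj y Hy.
  apply Hzero.
  destruct (Rle_lt_or_eq_dec 0 (d (T y) y) (Hpos _ _)) as [Hlt | Heq]; [| auto].
  exfalso.
  destruct (Hreg (d (T y) y / 2)) as [N HN]; [lra |].
  destruct (iter_surj_on T D Hsurj N y Hy) as [x [_ Hxy]].
  specialize (HN N (le_n N) x); simpl in HN; rewrite Hxy in HN.
  lra.
Qed.

Lemma gen_semigroup_fix {M : Type} (F : (M -> M) -> Prop) (x : M) :
  (forall T, F T -> T x = x) -> forall T, gen_semigroup F T -> T x = x.
Proof.
  intros Hfix T HT; induction HT as [T HT | T1 T2 _ IH1 _ IH2].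
  - exact (Hfix T HT).
  - rewrite IH2; exact IH1.
Qed.

Theorem theorem3p10 (M : Type) (d : M -> M -> R) (F : (M -> M) -> Prop) :
  is_metric d ->
  (forall T, F T -> unif_asympt_regular d T) ->
  subsurjective (gen_semigroup F) ->
  exists x : M, forall T, gen_semigroup F T -> T x = x.
Proof.
  intros Hd Hreg [D [[x0 Hx0] HD]].
  exists x0; apply gen_semigroup_fix; intros T HT.
  apply (unif_asympt_regular_fix_surj_on d T D Hd (Hreg T HT)); [| exact Hx0].
  intros y Hy; exact (proj1 (HD T (gen_base F T HT) y) Hy).
Qed.
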